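(* Suppose $n\in\mathbb N$ with $n\equiv1\pmod 4$. Then \[ \sum_{d\mid n}\left(\frac{-1}{d}\right)d^2+6\sum_{d\mid\frac n3}\left(\frac{-1}{d}\right)d^2>0 . \] Moreover, let $A(n)$ denote the $n$-th Fourier coefficient of \[ \mathcal E(z):=\sum_{\substack{n\ge1\\ n\equiv1\ (12)}}\sum_{d\mid n}\left(\tfrac{-1}{d}\right)d^2q^n-\frac12\sum_{\substack{n\ge1\\ n\equiv5\ (12)}}\sum_{d\mid n}\left(\tfrac{-1}{d}\right)d^2q^n-2\sum_{\substack{n\ge1\\ n\equiv 9\ (12)}}\Big(\sum_{d\mid n}\left(\tfrac{-1}{d}\right)d^2+6\sum_{d\mid \frac n3}\left(\tfrac{-1}{d}\right)d^2\Big)q^n . \] Then for every $n\in\mathbb N_0$, \[ \operatorname{sgn}(A(4n+1))=\begin{cases}1&\text{if } 3\mid n,\\ -1&\text{otherwise.}\end{cases} \]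
   Context: Sums are over positive divisors; a sum over $d\mid \frac n3$ is empty (zero) if $3\nmid n$. $\left(\frac{-1}{d}\right)$ is the Kronecker symbol. *)

From mathcomp Require Import all_boot all_order all_algebra.
Set Implicit Arguments. Unset Strict Implicit. Unset Printing Implicit Defensive.
Import Order.TTheory GRing.Theory Num.Theory.
Local Open Scope ring_scope.

(* Kronecker symbol (-1/d) for d : nat.  (-1/0) = 1 (|-1| = 1), (-1/2) = 1,
   and for odd d it is (-1)^((d-1)/2).  Hence (-1/d) = (-1/odd part of d). *)
Definition kron_m1 (d : nat) : int :=
  if d == 0%N then 1
  else let o := (d %/ 2 ^ logn 2 d)%N in
       if (o %% 4 == 1)%N then 1 else -1.

Definition sig_chi2 (m : nat) : int :=
  \sum_(d <- divisors m) kron_m1 d * (d%:Z) ^+ 2.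

Definition sig_chi2_3 (m : nat) : int :=
  if (3 %| m)%N then sig_chi2 (m %/ 3) else 0.

Definition coefA (n : nat) : rat :=
  if (n == 0)%N then 0
  else if (n %% 12 == 1)%N then (sig_chi2 n)%:~R
  else if (n %% 12 == 5)%N then - (1 / 2) * (sig_chi2 n)%:~R
  else if (n %% 12 == 9)%N then - 2 * (sig_chi2 n + 6 * sig_chi2_3 n)%:~R
  else 0.

From mathcomp Require Import all_boot all_order all_algebra.
From mathcomp Require Import zify ring lra.
Import Order.TTheory GRing.Theory Num.Theory.
Local Open Scope ring_scope.

(* For odd m the term d = m dominates sig_chi2 m.  Every other divisor is
   d = m/(2i+1) with i >= 1, and 4 d^2 <= m^2/(i(i+1)) = m^2 (1/i - 1/(i+1)),
   so the proper divisors contribute less than m^2/4 in absolute value and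
   (-1/m) sig_chi2 m > 3m^2/4.  If n = 3k = 1 (mod 4), the divisors of n
   divisible by 3 contribute (-1/3)*9 sig_chi2 k = -9 sig_chi2 k, the others
   some T with |T| < n^2/4 = 9k^2/4, and k = 3 (mod 4) gives
   -sig_chi2 k > 3k^2/4; hence sig_chi2 n + 6 sig_chi2 k = T - 3 sig_chi2 k > 0.
   The sign of A(4n+1) is then read off from 4n+1 mod 12. *)

Lemma kron_m1_sign d : kron_m1 d = 1 \/ kron_m1 d = -1.
Proof. by rewrite /kron_m1; case: ifP => _; [left | case: ifP => _; [left | right]]. Qed.

Lemma kron_m1_odd d : odd d -> kron_m1 d = if (d %% 4 == 1)%N then 1 else -1.
Proof.
move=> odd_d; rewrite /kron_m1 logn_coprime ?coprime2n // expn0 divn1.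
by case: d odd_d.
Qed.

Lemma kron_m1_3mul e : odd e -> kron_m1 (3 * e) = - kron_m1 e.
Proof.
move=> odd_e; have odd_3e : odd (3 * e) by rewrite oddM odd_e.
rewrite !kron_m1_odd //; have : (e %% 2 = 1)%N by rewrite modn2 odd_e.
by case: ifP => /eqP; case: ifP => /eqP; lia.
Qed.

Lemma normr_kron_m1 d : `|kron_m1 d| = 1.
Proof. by case: (kron_m1_sign d) => ->. Qed.

Lemma ler_kron_m1 d (x : int) : - `|x| <= kron_m1 d * x.
Proof. by apply: lerNnormlW; rewrite normrM normr_kron_m1 mul1r. Qed.

Definition proper_sq_sum (m : nat) : int :=
  \sum_(d <- divisors m | d != m) (d%:Z) ^+ 2.

Lemma kron_sig_chi2_ge m : (0 < m)%N ->
  (m%:Z) ^+ 2 - proper_sq_sum m <= kron_m1 m * sig_chi2 m.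
Proof.
move=> m_gt0; rewrite /sig_chi2 (bigD1_seq m) ?divisors_id ?divisors_uniq //=.
have kron_m1_sq : kron_m1 m * kron_m1 m = 1 by case: (kron_m1_sign m) => ->.
rewrite mulrDr mulrA kron_m1_sq mul1r lerD2l /proper_sq_sum -sumrN mulr_sumr.
apply: ler_sum => d _; apply: le_trans (ler_kron_m1 _ _).
by rewrite normrM normr_kron_m1 mul1r ger0_norm // exprn_ge0.
Qed.

Lemma sum_kron_sq_divisors_ge m (P : pred nat) : ~~ P m ->
  - proper_sq_sum m <= \sum_(d <- divisors m | P d) kron_m1 d * (d%:Z) ^+ 2.
Proof.
move=> notPm; rewrite /proper_sq_sum -sumrN big_mkcond [leRHS]big_mkcond /=.
apply: ler_sum => d _; have d2_ge0 : 0 <= (d%:Z) ^+ 2 by apply: exprn_ge0.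
case: (boolP (P d)) => Pd /=; last by case: ifP => _; lra.
have d_neq_m : d != m by apply: contraNneq notPm => <-.
by rewrite d_neq_m -{1}(ger0_norm d2_ge0) ler_kron_m1.
Qed.

Lemma sum_inv_mul_succ (R : numFieldType) N :
  \sum_(1 <= i < N.+1) ((i * i.+1)%N%:R : R)^-1 = 1 - (N.+1)%:R^-1.
Proof.
rewrite (telescope_sumr_eq (fun k => - (k%:R : R)^-1)) //; last first.
  move=> k /andP[k_gt0 _]; rewrite natrM opprK addrC.
  by field; rewrite nat1r !pnatr_eq0 /= -lt0n.
by rewrite opprK addrC; congr (_ + _); exact: invr1.
Qed.

Lemma ler_sum_uniq_index_iota (R : numDomainType) (h : nat -> R) s a b :
  (forall i, 0 <= h i) -> uniq s -> {in s, forall i, a <= i < b}%N ->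
  \sum_(i <- s) h i <= \sum_(a <= i < b) h i.
Proof.
move=> h_ge0 uniq_s s_sub.
rewrite [leRHS](bigID (mem s)) /= -[X in X + _]big_filter.
have perm_s : perm_eq [seq i <- index_iota a b | i \in s] s.
  apply: uniq_perm; rewrite ?filter_uniq ?iota_uniq // => i.
  rewrite mem_filter mem_index_iota andb_idr //; exact: s_sub.
by rewrite (perm_big _ perm_s) lerDl sumr_ge0.
Qed.

Lemma odd_divisor_cofactor m d : odd m -> (d %| m)%N ->
  m = (d * ((m %/ d)./2).*2.+1)%N.
Proof.
move=> odd_m d_dvd_m; have odd_q : odd (m %/ d).
  by move: odd_m; rewrite -{1}(divnK d_dvd_m) oddM => /andP[].
have -> : ((m %/ d)./2).*2.+1 = (m %/ d)%N by rewrite -[RHS]odd_double_half odd_q.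
by rewrite mulnC divnK.
Qed.

Lemma proper_sq_sum_lt m : odd m -> 4 * proper_sq_sum m < (m%:Z) ^+ 2.
Proof.
move=> odd_m; have m_gt0 : (0 < m)%N by case: m odd_m.
pose half_cof d := ((m %/ d)./2)%N.
pose h i : rat := (m ^ 2)%N%:R / (i * i.+1)%N%:R.
have cofE d : d \in divisors m -> m = (d * (half_cof d).*2.+1)%N.
  by rewrite -dvdn_divisors //; exact: odd_divisor_cofactor.
have proper_bound d : d \in divisors m -> d != m ->
    (0 < half_cof d <= m)%N /\ 4 * (d ^ 2)%N%:R <= h (half_cof d).
  move=> d_div d_neq_m; have := cofE d d_div; move: d_neq_m.
  case: (half_cof d) => [|i] d_neq_m e; first by rewrite e muln1 eqxx in d_neq_m.
  have d_gt0 : (0 < d)%N by move: m_gt0; rewrite e; case: (d).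
  split; first by nia.
  rewrite ler_pdivlMr ?ltr0n ?muln_gt0 // -natrM -natrM ler_nat; nia.
have uniq_half_cof : uniq [seq half_cof d | d <- divisors m & d != m].
  rewrite map_inj_in_uniq ?filter_uniq ?divisors_uniq // => d1 d2.
  rewrite !mem_filter => /andP[_ /cofE e1] /andP[_ /cofE e2] eq_i.
  by move: e1 e2; rewrite eq_i; nia.
have intr_sq n : (((n%:Z) ^+ 2)%:~R : rat) = (n ^ 2)%N%:R by rewrite natrX rmorphXn.
have h_ge0 i : 0 <= h i by rewrite divr_ge0 ?ler0n.
have sum_half_cof_le : \sum_(i <- [seq half_cof d | d <- divisors m & d != m]) h i
    <= \sum_(1 <= i < m.+1) h i.
  apply: ler_sum_uniq_index_iota => // i /mapP[d].
  rewrite mem_filter => /andP[d_neq_m d_div] ->.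
  by have [] := proper_bound d d_div d_neq_m.
rewrite -(ltr_int rat) rmorphM rmorph_sum /= mulr_sumr.
apply: le_lt_trans (le_trans _ sum_half_cof_le) _.
  rewrite big_map big_filter big_seq_cond [leRHS]big_seq_cond.
  apply: ler_sum => d /andP[d_div d_neq_m].
  by have [_] := proper_bound d d_div d_neq_m; rewrite intr_sq.
rewrite /h -mulr_sumr sum_inv_mul_succ intr_sq mulrBr mulr1 ltrBlDr ltrDl.
by rewrite mulr_gt0 ?invr_gt0 ?ltr0n ?expn_gt0 ?m_gt0.
Qed.

Lemma kron_sig_chi2_gt m : odd m -> 3 * (m%:Z) ^+ 2 < 4 * (kron_m1 m * sig_chi2 m).
Proof.
move=> odd_m; have m_gt0 : (0 < m)%N by case: m odd_m.
have := kron_sig_chi2_ge _ m_gt0; have := proper_sq_sum_lt _ odd_m; lra.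
Qed.

Lemma sig_chi2_gt0 m : (m %% 4 = 1)%N -> 0 < sig_chi2 m.
Proof.
move=> m_mod4; have odd_m : odd m by rewrite (divn_eq m 4) m_mod4 oddD oddM andbF.
have := kron_sig_chi2_gt _ odd_m; have := exprn_ge0 2 (ler0n int m).
by rewrite kron_m1_odd // m_mod4 mul1r; lra.
Qed.

Lemma perm_divisors_mul_dvdn p k : (0 < p)%N -> (0 < k)%N ->
  perm_eq [seq d <- divisors (p * k) | p %| d]%N [seq p * e | e <- divisors k]%N.
Proof.
move=> p_gt0 k_gt0; have pk_gt0 : (0 < p * k)%N by rewrite muln_gt0 p_gt0.
apply: uniq_perm; rewrite ?filter_uniq ?divisors_uniq //.
  by rewrite map_inj_uniq ?divisors_uniq // => e1 e2 /eqP; rewrite eqn_pmul2l // => /eqP.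
move=> d; rewrite mem_filter -dvdn_divisors //; apply/andP/mapP.
  case=> /dvdnP[e ->]; rewrite mulnC dvdn_pmul2l // => e_dvd_k.
  by exists e; rewrite -?dvdn_divisors.
case=> e; rewrite -dvdn_divisors // => e_dvd_k ->.
by rewrite dvdn_mulr // dvdn_pmul2l.
Qed.

Lemma sig_chi2_3mul k : odd k ->
  sig_chi2 (3 * k) =
  \sum_(d <- divisors (3 * k) | ~~ (3 %| d)%N) kron_m1 d * (d%:Z) ^+ 2 - 9 * sig_chi2 k.
Proof.
move=> odd_k; have k_gt0 : (0 < k)%N by case: k odd_k.
rewrite [LHS](bigID (fun d => 3 %| d)%N) addrC /= -big_filter.
rewrite (perm_big _ (perm_divisors_mul_dvdn _ _ _ k_gt0)) // big_map mulr_sumr -sumrN.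
congr (_ + _); rewrite big_seq [RHS]big_seq; apply: eq_bigr => e.
rewrite -dvdn_divisors // => e_dvd_k; have odd_e : odd e.
  by move: odd_k; rewrite -(divnK e_dvd_k) oddM => /andP[].
by rewrite kron_m1_3mul // PoszM; ring.
Qed.

Lemma sig_chi2_add_sig_chi2_3_gt0 n : (n %% 4 = 1)%N -> 0 < sig_chi2 n + 6 * sig_chi2_3 n.
Proof.
move=> n_mod4; rewrite /sig_chi2_3; case: ifP => [/dvdnP[k n_eq] | _]; last first.
  by rewrite mulr0 addr0 sig_chi2_gt0.
move: n_mod4; rewrite {}n_eq mulnK // mulnC => n_mod4.
have k_mod4 : (k %% 4 = 3)%N by lia.
have odd_k : odd k by rewrite (divn_eq k 4) k_mod4 oddD oddM andbF.
have odd_3k : odd (3 * k) by rewrite oddM odd_k.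
have sq_3k : ((3 * k)%N%:Z) ^+ 2 = 9 * (k%:Z) ^+ 2 by rewrite PoszM; ring.
have := kron_sig_chi2_gt _ odd_k; rewrite kron_m1_odd // k_mod4 /= mulN1r.
have := proper_sq_sum_lt _ odd_3k; rewrite sq_3k.
have := sum_kron_sq_divisors_ge (3 * k) (fun d => ~~ (3 %| d))%N; rewrite negbK dvdn_mulr //=.
by rewrite sig_chi2_3mul //; lra.
Qed.

Theorem lemma5p2 :
  (forall n : nat, (n %% 4 = 1)%N -> 0 < sig_chi2 n + 6 * sig_chi2_3 n) /\
  (forall n : nat, Num.sg (coefA (4 * n + 1)) = if (3 %| n)%N then 1 else -1).
Proof.
split=> [|n]; first exact: sig_chi2_add_sig_chi2_3_gt0.
have m_mod4 : ((4 * n + 1) %% 4 = 1)%N by lia.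
have := sig_chi2_gt0 _ m_mod4; have := sig_chi2_add_sig_chi2_3_gt0 _ m_mod4.
rewrite -!(ltr0z rat) /coefA addn_eq0 andbF /dvdn => sig_add_gt0 sig_gt0.
have [n_mod3|[n_mod3|n_mod3]] : (n %% 3 = 0 \/ n %% 3 = 1 \/ n %% 3 = 2)%N by lia.
- have -> : ((4 * n + 1) %% 12 = 1)%N by lia.
  by rewrite n_mod3 gtr0_sg.
- have -> : ((4 * n + 1) %% 12 = 5)%N by lia.
  by rewrite n_mod3 ltr0_sg //; lra.
- have -> : ((4 * n + 1) %% 12 = 9)%N by lia.
  by rewrite n_mod3 ltr0_sg //; lra.
Qed.
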